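(* Let $d\in\{2,3\}$, $\kappa>0$, $\sigma^{-1}=2\kappa$, $\rho(s)=(2/s)^{d/2}\Gamma(d/2+1)J_{d/2}(s)$ (with $\rho(0)=1$), and $k(t)=\rho(\sigma^{-1}|t|)$ for $t\in\mathbb{R}^d$. Let $\mathfrak{d}(x,x')=\sigma^{-1}|x-x'|/\sqrt{d+2}$ and $|v|_\ast=\sigma^{-1}|v|/\sqrt{d+2}$ for $v\in\mathbb{R}^d$. Then for all $x,x'\in\mathbb{R}^d$ with $\mathfrak{d}(x,x')\le r_{\mathrm{near}}:=1/\sqrt5$ and all $v\in\mathbb{R}^d$, $$-v^T\nabla^2k(x-x')\,v\ \ge\ \bar\epsilon_2\,|v|_\ast^2,\qquad\text{where }\bar\epsilon_2:=0.6<r_{\mathrm{near}}^{-2}.$$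
   Context: $J_{d/2}$ is the Bessel function of the first kind of order $d/2$. The function $k$ is the kernel $K(x,x')=k(x-x')=\int_{B(0,2\kappa)}e^{i\langle\omega,x-x'\rangle}\,d\Lambda(\omega)$ with $\Lambda$ uniform on $B(0,2\kappa)$; it is smooth on $\mathbb{R}^d$. The quantity $v^T\nabla^2k(x-x')v$ is the paper's $K^{(02)}(x,x')[v,v]$, $\mathfrak{d}$ is its Fisher metric distance and $|v|_\ast$ its norm $|v|_x$. *)

From Stdlib Require Import Reals Lra.
From Coquelicot Require Import Coquelicot.
Open Scope R_scope.

(* Vectors of R^d are represented as functions nat -> R; only the
   coordinates 0..d-1 are used by every definition below. *)

Fixpoint sumd (n : nat) (f : nat -> R) : R :=
  match n with
  | O => 0
  | S m => sumd m f + f m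
  end.

Definition vnorm (d : nat) (x : nat -> R) : R :=
  sqrt (sumd d (fun i => x i ^ 2)).

Definition vsub (x y : nat -> R) : nat -> R := fun i => x i - y i.

(* rising product (nu+1)(nu+2)...(nu+m) = Gamma(nu+m+1)/Gamma(nu+1) *)
Fixpoint rising (nu : R) (m : nat) : R :=
  match m with
  | O => 1
  | S p => rising nu p * (nu + INR (S p))
  end.

(* rho(s) = (2/s)^nu Gamma(nu+1) J_nu(s) with nu = d/2, written out from the
   power series J_nu(s) = sum_m (-1)^m /(m! Gamma(m+nu+1)) (s/2)^(2m+nu);
   this gives rho(s) = sum_m (-1)^m (s^2/4)^m / (m! (nu+1)...(nu+m)),
   an entire function with rho(0) = 1. *)
Definition rho (d : nat) (s : R) : R :=
  let nu := INR d / 2 in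
  Series (fun m => (-1) ^ m * (s ^ 2 / 4) ^ m / (INR (Factorial.fact m) * rising nu m)).

Definition kern (d : nat) (kappa : R) (t : nat -> R) : R :=
  rho d (2 * kappa * vnorm d t).

Definition partial (f : (nat -> R) -> R) (i : nat) (t : nat -> R) : R :=
  Derive (fun h => f (fun j => if Nat.eqb j i then t j + h else t j)) 0.

Definition hess_form (d : nat) (f : (nat -> R) -> R) (t v : nat -> R) : R :=
  sumd d (fun i => sumd d (fun j =>
    v i * v j * partial (fun y => partial f j y) i t)).

Definition fdist (d : nat) (kappa : R) (x x' : nat -> R) : R :=
  2 * kappa * vnorm d (vsub x x') / sqrt (INR d + 2).

Definition fnorm (d : nat) (kappa : R) (v : nat -> R) : R :=
  2 * kappa * vnorm d v / sqrt (INR d + 2).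

From Stdlib Require Import Reals Lra Lia.
From Coquelicot Require Import Coquelicot.
Open Scope R_scope.

(* The kernel is radial: with c = 2 kappa, nu = d/2 and u = c^2 |t|^2 we have
   k(t) = G(u) for the entire series G(z) = sum_m (-1)^m z^m / (4^m m! (nu+1)...(nu+m)),
   so v^T (nabla^2 k)(t) v = 2 c^2 G'(u) |v|^2 + 4 c^4 G''(u) (t.v)^2.
   For 0 <= u <= 4 (nu + 1) the series of G' and G'' alternate with decreasing terms,
   which gives -G'(u) >= 1/(2D) - u/(4D(D+2)) and G''(u) <= 1/(4D(D+2)) with D = d + 2.
   By Cauchy-Schwarz, (t.v)^2 <= |t|^2 |v|^2, and the hypothesis on the Fisher distance
   reads u <= D/5; together these give -v^T (nabla^2 k) v >= (1 - 3u/(2(D+2))) |v|_*^2,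
   and the factor is at least 7/10 in every dimension. *)

Definition sqnorm (n : nat) (y : nat -> R) : R := sumd n (fun i => y i ^ 2).

Definition dot (n : nat) (x y : nat -> R) : R := sumd n (fun i => x i * y i).

Lemma sumd_ext n f g : (forall i, (i < n)%nat -> f i = g i) -> sumd n f = sumd n g.
Proof.
  induction n as [|n IH]; intro Hfg; cbn [sumd]; [reflexivity|].
  rewrite IH, Hfg; auto with arith.
Qed.

Lemma sumd_add n f g : sumd n (fun i => f i + g i) = sumd n f + sumd n g.
Proof. induction n as [|n IH]; cbn [sumd]; [ring|rewrite IH; ring]. Qed.

Lemma sumd_mult_l n a f : sumd n (fun i => a * f i) = a * sumd n f.
Proof. induction n as [|n IH]; cbn [sumd]; [ring|rewrite IH; ring]. Qed.

Lemma sumd_kronecker n f i : (i < n)%nat ->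
  sumd n (fun j => f j * (if Nat.eqb j i then 1 else 0)) = f i.
Proof.
  induction n as [|n IH]; intro Hi; [lia|cbn [sumd]].
  destruct (Nat.eqb_spec n i) as [<-|Hne].
  - rewrite (sumd_ext n _ (fun j => 0 * f j)), sumd_mult_l; [ring|].
    intros j Hj. replace (Nat.eqb j n) with false by (symmetry; apply Nat.eqb_neq; lia). ring.
  - rewrite IH by lia. ring.
Qed.

Lemma sqnorm_ge0 n y : 0 <= sqnorm n y.
Proof.
  unfold sqnorm; induction n as [|n IH]; cbn [sumd]; [lra|].
  pose proof (pow2_ge_0 (y n)); lra.
Qed.

Lemma dot_sq_le n x y : dot n x y ^ 2 <= sqnorm n x * sqnorm n y.
Proof.
  unfold dot; induction n as [|n IH]; [unfold sqnorm; simpl; lra|].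
  change ((sumd n (fun i => x i * y i) + x n * y n) ^ 2
    <= (sqnorm n x + x n ^ 2) * (sqnorm n y + y n ^ 2)).
  pose proof (sqnorm_ge0 n x) as Hx; pose proof (sqnorm_ge0 n y) as Hy.
  set (P := sumd n (fun i => x i * y i)) in *.
  set (T := sqnorm n x) in *; set (W := sqnorm n y) in *.
  destruct (Req_dec T 0) as [HT0|HT0].
  - assert (P = 0) by (rewrite HT0 in IH; nra). subst P. rewrite HT0. nra.
  - (* [T (T y_n^2 + W x_n^2 - 2 P x_n y_n) = (T y_n - P x_n)^2 + x_n^2 (T W - P^2)] *)
    assert (0 <= (T * y n - P * x n) ^ 2) by apply pow2_ge_0.
    assert (0 <= x n ^ 2 * (T * W - P ^ 2)) by (apply Rmult_le_pos; nra).
    assert (0 <= T * (T * y n ^ 2 + W * x n ^ 2 - 2 * P * x n * y n)) by nra.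
    assert (0 <= T * y n ^ 2 + W * x n ^ 2 - 2 * P * x n * y n) by nra.
    nra.
Qed.

Definition coord_shift (y : nat -> R) (i : nat) (h : R) : nat -> R :=
  fun j => if Nat.eqb j i then y j + h else y j.

Lemma sqnorm_coord_shift n y i h : (i < n)%nat ->
  sqnorm n (coord_shift y i h) = sqnorm n y + 2 * h * y i + h ^ 2.
Proof.
  unfold sqnorm; induction n as [|n IH]; intro Hi; [lia|cbn [sumd]].
  destruct (Nat.eqb_spec i n) as [->|Hne].
  - rewrite (sumd_ext n (fun k => coord_shift y n h k ^ 2) (fun k => y k ^ 2)).
    + unfold coord_shift; rewrite Nat.eqb_refl; ring.
    + intros k Hk; unfold coord_shift.
      replace (Nat.eqb k n) with false by (symmetry; apply Nat.eqb_neq; lia). reflexivity.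
  - rewrite IH by lia. unfold coord_shift.
    replace (Nat.eqb n i) with false by (symmetry; apply Nat.eqb_neq; lia). ring.
Qed.

Lemma coord_shift_zero y i j : coord_shift y i 0 j = y j.
Proof. unfold coord_shift; destruct (Nat.eqb j i); ring. Qed.

Lemma partial_ext f g i t : (forall y, f y = g y) -> partial f i t = partial g i t.
Proof. intro Hfg; apply Derive_ext; intro h; apply Hfg. Qed.

Lemma hess_form_ext n f g t v : (forall y, f y = g y) ->
  hess_form n f t v = hess_form n g t v.
Proof.
  intro Hfg; unfold hess_form.
  apply sumd_ext; intros i _; apply sumd_ext; intros j _.
  f_equal; apply partial_ext; intro y; now apply partial_ext.
Qed.

Section RadialHessian.

Variables (F F' F'' : R -> R) (C : R) (n : nat).
Hypothesis F_deriv : forall z, is_derive F z (F' z).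
Hypothesis F'_deriv : forall z, is_derive F' z (F'' z).

Lemma is_derive_radial_shift (G G' : R -> R) y i :
  (forall z, is_derive G z (G' z)) -> (i < n)%nat ->
  is_derive (fun h => G (C * sqnorm n (coord_shift y i h))) 0
    (G' (C * sqnorm n y) * (2 * C * y i)).
Proof.
  intros HG Hi.
  apply is_derive_ext with (fun h => G (C * (sqnorm n y + 2 * h * y i + h ^ 2))).
  { intro h; now rewrite sqnorm_coord_shift. }
  assert (Hin : is_derive (fun h => C * (sqnorm n y + 2 * h * y i + h ^ 2)) 0 (2 * C * y i))
    by (auto_derive; [exact I|ring]).
  replace (C * sqnorm n y) with (C * (sqnorm n y + 2 * 0 * y i + 0 ^ 2)) by ring.
  rewrite Rmult_comm; exact (is_derive_comp G _ 0 _ _ (HG _) Hin).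
Qed.

Lemma partial_radial j y : (j < n)%nat ->
  partial (fun y => F (C * sqnorm n y)) j y = F' (C * sqnorm n y) * (2 * C * y j).
Proof.
  intro Hj; apply is_derive_unique; exact (is_derive_radial_shift F F' y j F_deriv Hj).
Qed.

Lemma partial2_radial i j t : (i < n)%nat -> (j < n)%nat ->
  partial (partial (fun y => F (C * sqnorm n y)) j) i t =
  F'' (C * sqnorm n t) * (2 * C * t i) * (2 * C * t j)
  + F' (C * sqnorm n t) * (2 * C * (if Nat.eqb j i then 1 else 0)).
Proof.
  intros Hi Hj; unfold partial at 1.
  rewrite (Derive_ext _
    (fun h => F' (C * sqnorm n (coord_shift t i h)) * (2 * C * coord_shift t i h j)))
    by (intro h; exact (partial_radial j _ Hj)).
  assert (Hlin : is_derive (fun h => 2 * C * coord_shift t i h j) 0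
                   (2 * C * (if Nat.eqb j i then 1 else 0))).
  { unfold coord_shift; destruct (Nat.eqb j i); auto_derive; auto; ring. }
  rewrite (is_derive_unique _ _ _
    (Derive.is_derive_mult _ _ 0 _ _ (is_derive_radial_shift F' F'' t i F'_deriv Hi) Hlin)).
  rewrite sqnorm_coord_shift, coord_shift_zero by exact Hi.
  replace (sqnorm n t + 2 * 0 * t i + 0 ^ 2) with (sqnorm n t) by ring.
  ring.
Qed.

Lemma hess_form_radial t v :
  hess_form n (fun y => F (C * sqnorm n y)) t v =
  4 * C ^ 2 * F'' (C * sqnorm n t) * dot n t v ^ 2 + 2 * C * F' (C * sqnorm n t) * sqnorm n v.
Proof.
  set (u := C * sqnorm n t); unfold hess_form.
  rewrite (sumd_ext n _ (fun i =>
    4 * C ^ 2 * F'' u * dot n t v * (t i * v i) + 2 * C * F' u * v i ^ 2)).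
  - rewrite sumd_add, !sumd_mult_l. unfold dot, sqnorm. ring.
  - intros i Hi.
    rewrite (sumd_ext n _ (fun j =>
      4 * C ^ 2 * F'' u * (t i * v i) * (t j * v j)
      + 2 * C * F' u * v i * (v j * (if Nat.eqb j i then 1 else 0)))).
    + rewrite sumd_add, !sumd_mult_l, sumd_kronecker by exact Hi. unfold dot. ring.
    + intros j Hj. rewrite partial2_radial by assumption. fold u. ring.
Qed.

End RadialHessian.

Lemma alt_series_bounds b l : (forall m, b (S m) <= b m) -> is_series (tg_alt b) l ->
  b 0%nat - b 1%nat <= l <= b 0%nat.
Proof.
  intros Hdec Hser.
  assert (Hlim : Un_cv b 0).
  { apply is_lim_seq_Reals, is_lim_seq_abs_0.
    assert (L : is_lim_seq (tg_alt b) 0) by (apply ex_series_lim_0; exists l; exact Hser).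
    apply is_lim_seq_abs_0 in L.
    eapply is_lim_seq_ext; [|exact L].
    intro m; unfold tg_alt; rewrite Rabs_mult, pow_1_abs; ring. }
  apply is_series_Reals in Hser.
  pose proof (alternated_series_ineq b l 0 Hdec Hlim Hser) as H.
  cbn in H; unfold tg_alt in H; cbn in H; lra.
Qed.

Lemma rising_pos nu m : 0 <= nu -> 0 < rising nu m.
Proof.
  intro Hnu; induction m as [|m IH]; cbn [rising]; [lra|].
  apply Rmult_lt_0_compat; [exact IH|]. rewrite S_INR; pose proof (pos_INR m); lra.
Qed.

Definition bessel_weight (nu : R) (m : nat) : R :=
  / (4 ^ m * INR (Factorial.fact m) * rising nu m).

Definition bessel_coef (nu : R) (m : nat) : R := (-1) ^ m * bessel_weight nu m.

Section BesselSeries.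

Variable nu : R.
Hypothesis nu_ge0 : 0 <= nu.

Lemma bessel_weight_pos m : 0 < bessel_weight nu m.
Proof.
  apply Rinv_0_lt_compat, Rmult_lt_0_compat; [apply Rmult_lt_0_compat|].
  - apply pow_lt; lra.
  - apply lt_0_INR, Factorial.lt_O_fact.
  - now apply rising_pos.
Qed.

Lemma bessel_weight_S m :
  bessel_weight nu (S m) = bessel_weight nu m / (4 * (INR m + 1) * (nu + INR m + 1)).
Proof.
  unfold bessel_weight; rewrite fact_simpl, mult_INR; cbn [rising pow].
  rewrite !S_INR.
  pose proof (rising_pos nu m nu_ge0); pose proof (pos_INR m).
  assert (0 < INR (Factorial.fact m)) by apply lt_0_INR, Factorial.lt_O_fact.
  assert (0 < 4 ^ m) by (apply pow_lt; lra).
  field; repeat split; lra.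
Qed.

Lemma bessel_weight_1 : bessel_weight nu 1 = / (4 * (nu + 1)).
Proof. unfold bessel_weight; simpl; field; lra. Qed.

Lemma bessel_weight_2 : bessel_weight nu 2 = / (32 * (nu + 1) * (nu + 2)).
Proof. unfold bessel_weight; simpl; field; lra. Qed.

Lemma bessel_weight_step m u : 0 <= u <= 4 * (nu + 1) ->
  (INR m + 1) * bessel_weight nu (S m) * u <= bessel_weight nu m.
Proof.
  intro Hu; rewrite bessel_weight_S.
  pose proof (bessel_weight_pos m); pose proof (pos_INR m).
  replace ((INR m + 1) * (bessel_weight nu m / (4 * (INR m + 1) * (nu + INR m + 1))) * u)
    with (bessel_weight nu m * (u / (4 * (nu + INR m + 1)))) by (field; lra).
  assert (u / (4 * (nu + INR m + 1)) <= 1)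
    by (apply Rle_div_l; lra).
  nra.
Qed.

Lemma CV_radius_bessel_coef : CV_radius (bessel_coef nu) = p_infty.
Proof.
  apply CV_radius_infinite_DAlembert.
  - intro m; unfold bessel_coef.
    apply Rmult_integral_contrapositive; split.
    + apply pow_nonzero; lra.
    + pose proof (bessel_weight_pos m); lra.
  - apply is_lim_seq_ext with (fun m => / (4 * (INR m + 1) * (nu + INR m + 1))).
    + intro m; pose proof (bessel_weight_pos m); pose proof (pos_INR m).
      unfold bessel_coef; rewrite bessel_weight_S; cbn [pow].
      replace (-1 * (-1) ^ m * (bessel_weight nu m / (4 * (INR m + 1) * (nu + INR m + 1)))
               / ((-1) ^ m * bessel_weight nu m))
        with (- / (4 * (INR m + 1) * (nu + INR m + 1)))
        by (field; repeat split; try lra; apply pow_nonzero; lra).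
      rewrite Rabs_Ropp, Rabs_right; [reflexivity|].
      left; apply Rinv_0_lt_compat; nra.
    + replace (Finite 0) with (Rbar_inv p_infty) by reflexivity.
      apply is_lim_seq_inv; [|discriminate].
      apply is_lim_seq_le_p_loc with INR; [|apply is_lim_seq_INR].
      exists 0%nat; intros m _; pose proof (pos_INR m); nra.
Qed.

Lemma neg_deriv_bessel_series_ge u : 0 <= u <= 4 * (nu + 1) ->
  bessel_weight nu 1 - 2 * bessel_weight nu 2 * u
    <= - PSeries (PS_derive (bessel_coef nu)) u.
Proof.
  intro Hu.
  assert (Hser : is_series (tg_alt (fun m => INR (S m) * bessel_weight nu (S m) * u ^ m))
                   (- PSeries (PS_derive (bessel_coef nu)) u)).
  { assert (HR : Rbar_lt (Rabs u) (CV_radius (bessel_coef nu)))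
      by (rewrite CV_radius_bessel_coef; exact I).
    pose proof (is_series_opp _ _
      (proj1 (is_pseries_R _ _ _) (PSeries_correct _ _ (ex_pseries_derive _ _ HR)))) as H.
    eapply is_series_ext; [|exact H]; intro m.
    unfold tg_alt, PS_derive, bessel_coef; replace (m + 1)%nat with (S m) by lia.
    match goal with |- ?lhs = ?rhs => change (@eq R lhs rhs) end.
    change (opp ?y) with (- y); cbn [pow]; ring. }
  apply alt_series_bounds in Hser; [cbn [INR pow] in Hser; lra|].
  intro m; pose proof (bessel_weight_step (S m) u Hu) as Hstep.
  pose proof (bessel_weight_pos (S m)).
  assert (1 <= INR (S m)) by (rewrite S_INR; pose proof (pos_INR m); lra).
  assert (0 <= u ^ m) by (apply pow_le; lra).
  rewrite (S_INR (S m)); cbn [pow].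
  assert (0 <= bessel_weight nu (S m) * u ^ m) by (apply Rmult_le_pos; lra).
  apply Rle_trans with (bessel_weight nu (S m) * u ^ m); [|nra].
  replace ((INR (S m) + 1) * bessel_weight nu (S (S m)) * (u * u ^ m))
    with ((INR (S m) + 1) * bessel_weight nu (S (S m)) * u * u ^ m) by ring.
  apply Rmult_le_compat_r; assumption.
Qed.

Lemma deriv2_bessel_series_le u : 0 <= u <= 4 * (nu + 1) ->
  PSeries (PS_derive (PS_derive (bessel_coef nu))) u <= 2 * bessel_weight nu 2.
Proof.
  intro Hu.
  assert (Hser : is_series
    (tg_alt (fun m => INR (S m) * INR (S (S m)) * bessel_weight nu (S (S m)) * u ^ m))
    (PSeries (PS_derive (PS_derive (bessel_coef nu))) u)).
  { assert (HR : Rbar_lt (Rabs u) (CV_radius (PS_derive (bessel_coef nu))))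
      by (rewrite CV_radius_derive, CV_radius_bessel_coef; exact I).
    pose proof (proj1 (is_pseries_R _ _ _) (PSeries_correct _ _ (ex_pseries_derive _ _ HR))) as H.
    eapply is_series_ext; [|exact H]; intro m.
    unfold tg_alt, PS_derive, bessel_coef.
    replace (m + 1)%nat with (S m) by lia; replace (S m + 1)%nat with (S (S m)) by lia.
    match goal with |- ?lhs = ?rhs => change (@eq R lhs rhs) end.
    cbn [pow]; ring. }
  apply alt_series_bounds in Hser; [cbn [INR pow] in Hser; lra|].
  intro m; pose proof (bessel_weight_step (S (S m)) u Hu) as Hstep.
  pose proof (bessel_weight_pos (S (S m))).
  assert (1 <= INR (S m)) by (rewrite S_INR; pose proof (pos_INR m); lra).
  assert (0 <= u ^ m) by (apply pow_le; lra).
  rewrite (S_INR (S (S m))); cbn [pow].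
  apply Rle_trans with (INR (S (S m)) * bessel_weight nu (S (S m)) * u ^ m).
  - replace (INR (S (S m)) * (INR (S (S m)) + 1) * bessel_weight nu (S (S (S m))) * (u * u ^ m))
      with (INR (S (S m)) * ((INR (S (S m)) + 1) * bessel_weight nu (S (S (S m))) * u) * u ^ m)
      by ring.
    apply Rmult_le_compat_r, Rmult_le_compat_l; [assumption|apply pos_INR|assumption].
  - assert (0 <= INR (S (S m)) * bessel_weight nu (S (S m)) * u ^ m)
      by (apply Rmult_le_pos; [apply Rmult_le_pos; [apply pos_INR|lra]|lra]).
    nra.
Qed.

End BesselSeries.

Lemma is_derive_PSeries_entire (a : nat -> R) z : CV_radius a = p_infty ->
  is_derive (PSeries a) z (PSeries (PS_derive a) z).
Proof. intro Ha; apply is_derive_PSeries; rewrite Ha; exact I. Qed.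

Lemma kern_radial d kappa y :
  kern d kappa y = PSeries (bessel_coef (INR d / 2)) ((2 * kappa) ^ 2 * sqnorm d y).
Proof.
  unfold kern, rho, vnorm, PSeries; cbv zeta.
  rewrite Rpow_mult_distr, pow2_sqrt by apply sqnorm_ge0; fold (sqnorm d y).
  apply Series_ext; intro m; unfold bessel_coef, bessel_weight.
  assert (0 < rising (INR d / 2) m) by (apply rising_pos; pose proof (pos_INR d); lra).
  assert (0 < INR (Factorial.fact m)) by apply lt_0_INR, Factorial.lt_O_fact.
  assert (0 < 4 ^ m) by (apply pow_lt; lra).
  unfold Rdiv; rewrite Rpow_mult_distr, pow_inv; field; lra.
Qed.

Lemma fnorm_sq d kappa v :
  fnorm d kappa v ^ 2 = (2 * kappa) ^ 2 * sqnorm d v / (INR d + 2).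
Proof.
  assert (0 < INR d + 2) by (pose proof (pos_INR d); lra).
  unfold fnorm, vnorm, Rdiv; rewrite !Rpow_mult_distr, pow2_sqrt by apply sqnorm_ge0.
  rewrite pow_inv, pow2_sqrt by lra; reflexivity.
Qed.

Lemma fdist_le_sq_bound d kappa x x' : 0 <= kappa ->
  fdist d kappa x x' <= 1 / sqrt 5 ->
  (2 * kappa) ^ 2 * sqnorm d (vsub x x') <= (INR d + 2) / 5.
Proof.
  intros Hkappa Hdist.
  assert (HD : 0 < INR d + 2) by (pose proof (pos_INR d); lra).
  assert (Hsq : fdist d kappa x x' ^ 2 <= (1 / sqrt 5) ^ 2).
  { apply pow_incr; split; [|exact Hdist].
    unfold fdist, vnorm, Rdiv.
    apply Rmult_le_pos; [apply Rmult_le_pos; [lra|apply sqrt_pos]|].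
    left; apply Rinv_0_lt_compat, sqrt_lt_R0; exact HD. }
  change (fdist d kappa x x') with (fnorm d kappa (vsub x x')) in Hsq.
  rewrite fnorm_sq in Hsq.
  unfold Rdiv in Hsq; rewrite (Rpow_mult_distr 1), pow_inv, pow2_sqrt in Hsq by lra.
  apply Rmult_le_reg_r with (/ (INR d + 2)); [apply Rinv_0_lt_compat; exact HD|].
  replace ((INR d + 2) / 5 * / (INR d + 2)) with (1 ^ 2 * / 5) by (field; lra).
  exact Hsq.
Qed.

Lemma radial_form_lower_bound C T W P D g1 g2 :
  0 <= C -> 0 <= T -> 0 <= W -> P ^ 2 <= T * W -> 0 < D -> C * T <= D / 5 ->
  / (2 * D) - 2 * / (8 * D * (D + 2)) * (C * T) <= - g1 ->
  g2 <= 2 * / (8 * D * (D + 2)) ->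
  - (4 * C ^ 2 * g2 * P ^ 2 + 2 * C * g1 * W) >= 6 / 10 * (C * W / D).
Proof.
  intros HC HT HW HP HD Hu Hg1 Hg2.
  set (p := / (8 * D * (D + 2))) in *.
  assert (Hp : 0 < p) by (apply Rinv_0_lt_compat; nra).
  assert (HgP : g2 * P ^ 2 <= 2 * p * (T * W)).
  { destruct (Rle_lt_dec g2 0).
    - assert (0 <= - g2 * P ^ 2) by (apply Rmult_le_pos; [lra|apply pow2_ge_0]). nra.
    - nra. }
  assert (H1 : - (2 * C * g1 * W) >= 2 * C * W * (/ (2 * D) - 2 * p * (C * T))).
  { assert (0 <= 2 * C * W) by nra. nra. }
  assert (H2 : 4 * C ^ 2 * g2 * P ^ 2 <= 8 * p * (C * T) * (C * W)).
  { assert (0 <= 4 * C ^ 2) by nra. nra. }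
  assert (Hcorr : 2 * C * W * (/ (2 * D) - 2 * p * (C * T)) - 8 * p * (C * T) * (C * W)
                  = C * W / D * (1 - 3 / 2 * (C * T) / (D + 2)))
    by (unfold p; field; lra).
  assert (3 / 2 * (C * T) / (D + 2) <= 4 / 10) by (apply Rle_div_l; lra).
  assert (0 <= C * W / D) by (apply Rle_mult_inv_pos; nra).
  nra.
Qed.

Theorem neg_hess_form_kern_ge d kappa x x' v : 0 < kappa ->
  fdist d kappa x x' <= 1 / sqrt 5 ->
  - hess_form d (kern d kappa) (vsub x x') v >= 6 / 10 * fnorm d kappa v ^ 2.
Proof.
  intros Hkappa Hdist.
  set (nu := INR d / 2); set (a := bessel_coef nu).
  set (C := (2 * kappa) ^ 2); set (t := vsub x x'); set (u := C * sqnorm d t).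
  assert (Hnu : 0 <= nu) by (pose proof (pos_INR d); unfold nu; lra).
  assert (HD : INR d + 2 = 2 * (nu + 1)) by (unfold nu; field).
  assert (Hu : u <= (INR d + 2) / 5) by (apply fdist_le_sq_bound; lra).
  assert (Hu4 : 0 <= u <= 4 * (nu + 1))
    by (split; [apply Rmult_le_pos; [apply pow2_ge_0|apply sqnorm_ge0]|lra]).
  rewrite (hess_form_ext _ _ (fun y => PSeries a (C * sqnorm d y))) by apply kern_radial.
  rewrite (hess_form_radial _ (PSeries (PS_derive a)) (PSeries (PS_derive (PS_derive a)))),
    fnorm_sq; fold C u.
  - assert (Hp2 : 8 * (INR d + 2) * (INR d + 2 + 2) = 32 * (nu + 1) * (nu + 2))
      by (rewrite HD; ring).
    pose proof (neg_deriv_bessel_series_ge nu Hnu u Hu4) as Hg1.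
    pose proof (deriv2_bessel_series_le nu Hnu u Hu4) as Hg2.
    rewrite bessel_weight_1, bessel_weight_2 in Hg1 by exact Hnu.
    rewrite bessel_weight_2 in Hg2 by exact Hnu.
    apply (radial_form_lower_bound C (sqnorm d t) (sqnorm d v) (dot d t v));
      [apply pow2_ge_0 | apply sqnorm_ge0 | apply sqnorm_ge0 | apply dot_sq_le
      | lra | exact Hu | | ]; rewrite Hp2; [|exact Hg2].
    replace (2 * (INR d + 2)) with (4 * (nu + 1)) by (rewrite HD; ring).
    exact Hg1.
  - intro z; apply is_derive_PSeries_entire, CV_radius_bessel_coef, Hnu.
  - intro z; apply is_derive_PSeries_entire.
    rewrite CV_radius_derive; apply CV_radius_bessel_coef, Hnu.
Qed.

Theorem lemma3 (d : nat) (Hd : d = 2%nat \/ d = 3%nat) (kappa : R) (Hkappa : 0 < kappa)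
  (x x' v : nat -> R) :
  fdist d kappa x x' <= 1 / sqrt 5 ->
  - hess_form d (kern d kappa) (vsub x x') v >= (6 / 10) * (fnorm d kappa v) ^ 2.
Proof.
  (* The estimate holds in every dimension. *)
  exact (neg_hess_form_kern_ge d kappa x x' v Hkappa).
Qed.
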